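(* Let $b,n\ge1$ and $1\le c\le b$ be integers and let $p_1,\dots,p_b\ge 0$ satisfy $p_1=p_2=\dots=p_c>p_{c+1}\ge p_{c+2}\ge\dots\ge p_b$. Then for every integer $\tilde c$ with $1\le\tilde c\le c$ and every integer $k$ with $0\le k\le n(b-1)$, $$\frac{\Pr(\mathrm{DBS}(\tilde c))}{\tilde c^{\,n}}\ \ge\ \frac{\Pr(\mathrm{LDS}_{\le k})}{|\mathrm{LDS}_{\le k}|}.$$
   Context: Search-tree model: a complete $b$-ary tree of depth $n$ whose leaves are identified with sequences $(j_1,\dots,j_n)\in\{1,\dots,b\}^n$. Given reals $p_1,\dots,p_b\ge0$, the success probability of a leaf is $\prod_{i=1}^n p_{j_i}$, and for a set $S$ of leaves, $\Pr(S)=\sum_{(j_1,\dots,j_n)\in S}\prod_{i=1}^n p_{j_i}$; $|S|$ is the number of leaves in $S$. For $1\le c\le b$, $\mathrm{DBS}(c)=\{1,\dots,c\}^n$ (so $|\mathrm{DBS}(c)|=c^n$ and $\Pr(\mathrm{DBS}(c))=(\sum_{i=1}^c p_i)^n$). The discrepancy of a leaf $(j_1,\dots,j_n)$ is $\sum_{i=1}^n (j_i-1)$, and $\mathrm{LDS}_{\le k}$ is the set of leaves of discrepancy at most $k$. *)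

From mathcomp Require Import all_boot all_order all_algebra.
Set Implicit Arguments. Unset Strict Implicit. Unset Printing Implicit Defensive.
Import Order.TTheory GRing.Theory Num.Theory.
Local Open Scope ring_scope.

(* Leaves of the complete b-ary tree of depth n: sequences (j_1..j_n),
   encoded 0-based: leaf s : {ffun 'I_n -> 'I_b}, with j_i = s i + 1.
   Branch probabilities p : 'I_b -> R, with p (j-1) = p_j. *)

Definition leaf_prob (R : numDomainType) (n b : nat) (p : 'I_b -> R)
  (s : {ffun 'I_n -> 'I_b}) : R := \prod_(i < n) p (s i).

Definition Pr (R : numDomainType) (n b : nat) (p : 'I_b -> R)
  (S : {set {ffun 'I_n -> 'I_b}}) : R := \sum_(s in S) leaf_prob p s.

(* DBS(c) = {1..c}^n, i.e. all 0-based entries < c *)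
Definition DBS (n b c : nat) : {set {ffun 'I_n -> 'I_b}} :=
  [set s : {ffun 'I_n -> 'I_b} | [forall i, (s i < c)%N]].

(* discrepancy = sum_i (j_i - 1) = sum of 0-based entries *)
Definition discrepancy (n b : nat) (s : {ffun 'I_n -> 'I_b}) : nat :=
  (\sum_(i < n) (s i : nat))%N.

Definition LDS_le (n b k : nat) : {set {ffun 'I_n -> 'I_b}} :=
  [set s : {ffun 'I_n -> 'I_b} | (discrepancy s <= k)%N].

From mathcomp Require Import all_boot all_order all_algebra.
Set Implicit Arguments. Unset Strict Implicit. Unset Printing Implicit Defensive.
Import Order.TTheory GRing.Theory Num.Theory.
Local Open Scope ring_scope.

(* Every leaf has probability at most q^n, where q = p_1 = ... = p_c is the
   largest branch probability; the leaves of DBS(c~) all have probability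
   exactly q^n.  Hence the average leaf probability over DBS(c~) is the
   maximum possible average over any set of leaves, LDS_{<=k} included. *)

Lemma card_ord_lt (b c : nat) : (c <= b)%N -> #|[pred j : 'I_b | (j < c)%N]| = c.
Proof.
move=> le_cb.
rewrite (@eq_card _ _ [set widen_ord le_cb i | i : 'I_c]); last first.
  move=> j; rewrite [RHS]inE /=; apply/idP/imsetP => [lt_jc|[i _ ->]] /=.
    by exists (Ordinal lt_jc) => //; apply: val_inj.
  by rewrite inE /= ltn_ord.
rewrite card_imset ?card_ord //.
by move=> x y /(congr1 val) /= eq_xy; apply: val_inj.
Qed.

Lemma card_DBS (n b c : nat) : (c <= b)%N -> #|DBS n b c| = (c ^ n)%N.
Proof.
move=> le_cb.
have -> : DBS n b c = [set s | s \in ffun_on [pred j : 'I_b | (j < c)%N]].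
  by apply/setP => s; rewrite !inE.
by rewrite cardsE card_ffun_on card_ord_lt ?card_ord.
Qed.

Section LeafBounds.

Variables (R : realFieldType) (n b : nat) (p : 'I_b -> R) (q : R).

Lemma leaf_prob_le (s : {ffun 'I_n -> 'I_b}) :
  (forall j, 0 <= p j) -> (forall j, p j <= q) -> leaf_prob p s <= q ^+ n.
Proof.
move=> p_ge0 p_le; rewrite /leaf_prob -[n in q ^+ n]card_ord -prodr_const.
by apply: ler_prod => i _; rewrite p_ge0 p_le.
Qed.

Lemma Pr_le_card (S : {set {ffun 'I_n -> 'I_b}}) :
  (forall j, 0 <= p j) -> (forall j, p j <= q) -> Pr p S <= #|S|%:R * q ^+ n.
Proof.
move=> p_ge0 p_le; rewrite mulr_natl -sumr_const.
by apply: ler_sum => s _; apply: leaf_prob_le.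
Qed.

Lemma Pr_mean_le (S : {set {ffun 'I_n -> 'I_b}}) :
  0 <= q -> (forall j, 0 <= p j) -> (forall j, p j <= q) ->
  Pr p S / #|S|%:R <= q ^+ n.
Proof.
move=> q_ge0 p_ge0 p_le; have [->|S_gt0] := posnP #|S|.
  by rewrite invr0 mulr0 exprn_ge0.
by rewrite ler_pdivrMr ?ltr0n // mulrC Pr_le_card.
Qed.

Lemma Pr_DBS_const (c : nat) : (c <= b)%N ->
  (forall j : 'I_b, (j < c)%N -> p j = q) ->
  Pr p (DBS n b c) = (c ^ n)%:R * q ^+ n.
Proof.
move=> le_cb p_eq; rewrite -(@card_DBS n b c le_cb) mulr_natl -sumr_const.
apply: eq_bigr => s; rewrite inE => /forallP s_lt.
rewrite /leaf_prob -[n in q ^+ n]card_ord -prodr_const.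
by apply: eq_bigr => i _; apply: p_eq.
Qed.

Lemma Pr_DBS_mean (c : nat) : (0 < c)%N -> (c <= b)%N ->
  (forall j : 'I_b, (j < c)%N -> p j = q) ->
  Pr p (DBS n b c) / (c ^ n)%:R = q ^+ n.
Proof.
move=> c_gt0 le_cb p_eq.
by rewrite Pr_DBS_const // mulrC mulKf // pnatr_eq0 -lt0n expn_gt0 c_gt0.
Qed.

End LeafBounds.

Lemma branch_prob_le_last_equal (R : realFieldType) (b c : nat) (p : 'I_b -> R)
  (lt_c1b : (c.-1 < b)%N) :
  (forall i j : 'I_b, (i < c)%N -> (j < c)%N -> p i = p j) ->
  (forall i j : 'I_b, (i : nat) = c.-1 -> (j : nat) = c -> p j < p i) ->
  (forall i j : 'I_b, (c <= i)%N -> (i <= j)%N -> p j <= p i) ->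
  (0 < c)%N -> forall i, p i <= p (Ordinal lt_c1b).
Proof.
move=> p_eq p_drop p_dec c_gt0 i.
have lt_c1c : (Ordinal lt_c1b < c)%N by rewrite /= prednK.
have [lt_ic|le_ci] := ltnP i c; first by rewrite (p_eq i (Ordinal lt_c1b)).
have lt_cb : (c < b)%N := leq_ltn_trans le_ci (ltn_ord i).
apply: le_trans (p_dec (Ordinal lt_cb) i (leqnn c) le_ci) _.
exact/ltW/p_drop.
Qed.

Unset Implicit Arguments.

Theorem theorem2 (R : realFieldType) (b n c : nat) (p : 'I_b -> R)
  (hb : (1 <= b)%N) (hn : (1 <= n)%N) (hc1 : (1 <= c)%N) (hcb : (c <= b)%N)
  (hp0 : forall i, 0 <= p i)
  (heq : forall i j : 'I_b, (i < c)%N -> (j < c)%N -> p i = p j)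
  (hgt : forall i j : 'I_b, (i : nat) = c.-1 -> (j : nat) = c -> p j < p i)
  (hdec : forall i j : 'I_b, (c <= i)%N -> (i <= j)%N -> p j <= p i) :
  forall (ct k : nat), (1 <= ct)%N -> (ct <= c)%N -> (k <= n * (b - 1))%N ->
    Pr p (LDS_le n b k) / (#|LDS_le n b k|)%:R
      <= Pr p (DBS n b ct) / (ct ^ n)%:R.
Proof.
move=> ct k ct_gt0 le_ctc _.
have lt_c1b : (c.-1 < b)%N by rewrite prednK.
set q := p (Ordinal lt_c1b).
have p_le : forall i, p i <= q :=
  branch_prob_le_last_equal lt_c1b heq hgt hdec hc1.
have p_eq : forall j : 'I_b, (j < ct)%N -> p j = q.
  move=> j lt_jct; apply: heq; first exact: leq_trans lt_jct le_ctc.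
  by rewrite /= prednK.
rewrite (Pr_DBS_mean n ct_gt0 (leq_trans le_ctc hcb) p_eq).
exact: Pr_mean_le (hp0 _) hp0 p_le.
Qed.
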